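(* For every integer $d\ge0$ and every integer $a\ge\max(2,2d-1)$, there exists a constructible $6$-labeled graph $H_{d,a}$ in which half of the vertices have label $1$ and half have label $2$, such that (i) $|V(H_{d,a})|\le 8a^d-6$, and (ii) for every partial orientation $\vec{G}$ of $H_{d,a}$ of maximum outdegree less than $d$, there exist vertices $u$ and $v$ of labels $1$ and $2$ respectively, at distance exactly two in $H_{d,a}$, such that for every common neighbor $x$ of $u$ and $v$ we have $(u,x)\notin E(\vec{G})$ and $(v,x)\notin E(\vec{G})$.
   Context: All graphs are finite, simple and undirected. A partial orientation of a graph $G$ is a directed graph $\vec{G}$ on $V(G)$ such that every $(u,v)\in E(\vec{G})$ satisfies $uv\in E(G)$ (each edge may be directed in neither, one, or both directions). A $k$-labeled graph is a graph in which each vertex receives a label from $[k]$ (labels may repeat, not all need be used). The constructible $k$-labeled graphs are the smallest family such that: every one-vertex $k$-labeled graph is constructible; the disjoint union of at least two constructible $k$-labeled graphs is constructible; if $G'$ is constructible and $i,j\in[k]$, the graph obtained by changing all labels $i$ to $j$ is constructible; and if $G'$ is constructible and $i,j\in[k]$, the graph obtained by adding all edges between vertices with labels $i$ and $j$ is constructible. *)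

From mathcomp Require Import all_boot.
Set Implicit Arguments. Unset Strict Implicit. Unset Printing Implicit Defensive.

(* A k-labeled graph: a finite vertex type T, an adjacency relation e
   (symmetric, irreflexive -- guaranteed for constructible graphs), and a
   labeling T -> 'I_k.  Label i : 'I_k stands for the paper's label i+1. *)

Definition sum_rel (T1 T2 : finType) (e1 : rel T1) (e2 : rel T2) : rel (T1 + T2) :=
  fun x y => match x, y with
             | inl a, inl b => e1 a b
             | inr a, inr b => e2 a b
             | _, _ => false
             end.

Definition sum_lab (k : nat) (T1 T2 : finType) (l1 : T1 -> 'I_k) (l2 : T2 -> 'I_k)
  : T1 + T2 -> 'I_k :=
  fun x => match x with inl a => l1 a | inr b => l2 b end.

Definition relabel (k : nat) (T : finType) (l : T -> 'I_k) (i j : 'I_k) : T -> 'I_k :=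
  fun x => if l x == i then j else l x.

Definition add_edges (k : nat) (T : finType) (e : rel T) (l : T -> 'I_k) (i j : 'I_k)
  : rel T :=
  fun x y => e x y || ((x != y) &&
              (((l x == i) && (l y == j)) || ((l x == j) && (l y == i)))).

Definition lgraph_iso (k : nat) (T1 T2 : finType) (e1 : rel T1) (l1 : T1 -> 'I_k)
  (e2 : rel T2) (l2 : T2 -> 'I_k) (f : T1 -> T2) : Prop :=
  bijective f /\ (forall x y, e2 (f x) (f y) = e1 x y) /\ (forall x, l2 (f x) = l1 x).

Inductive constructible (k : nat) : forall T : finType, rel T -> (T -> 'I_k) -> Prop :=
| cons_single (i : 'I_k) :
    constructible (fun _ _ : unit => false) (fun _ : unit => i)
| cons_union (T1 T2 : finType) (e1 : rel T1) (l1 : T1 -> 'I_k)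
    (e2 : rel T2) (l2 : T2 -> 'I_k) :
    constructible e1 l1 -> constructible e2 l2 ->
    constructible (sum_rel e1 e2) (sum_lab l1 l2)
| cons_relabel (T : finType) (e : rel T) (l : T -> 'I_k) (i j : 'I_k) :
    constructible e l -> constructible e (relabel l i j)
| cons_join (T : finType) (e : rel T) (l : T -> 'I_k) (i j : 'I_k) :
    constructible e l -> constructible (add_edges e l i j) l
| cons_iso (T1 T2 : finType) (e1 : rel T1) (l1 : T1 -> 'I_k)
    (e2 : rel T2) (l2 : T2 -> 'I_k) (f : T1 -> T2) :
    constructible e1 l1 -> lgraph_iso e1 l1 e2 l2 f -> constructible e2 l2.

(* partial orientation of the graph (T, e): a directed relation o with
   o x y -> e x y (edges may be oriented in none, one or both directions) *)
Definition partial_orientation (T : finType) (e : rel T) (o : rel T) : Prop :=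
  forall x y, o x y -> e x y.

Definition outdeg (T : finType) (o : rel T) (x : T) : nat := #|[set y | o x y]|.

Definition dist2 (T : finType) (e : rel T) (u v : T) : Prop :=
  u != v /\ ~~ e u v /\ exists x, e u x && e x v.

(* Induction on d, starting from two isolated vertices of labels 1 and 2.  The graph
   for d + 1 consists of a copies of the graph for d; copy i receives a hub p_i of
   label 2 adjacent to its label-1 vertices and a hub q_i of label 1 adjacent to its
   label-2 vertices, and two apices u (label 1) and v (label 2) are joined to all q_i,
   resp. all p_i.  Under an orientation of outdegree at most d, u and v point to at
   most 2d < a hubs together, so some copy i has neither u -> q_i nor v -> p_i.  If a
   vertex s of copy i does not point to its hub, then s and the apex on the other side
   of that hub form the required pair, the hub being their only common neighbour.
   Otherwise every vertex of copy i spends an out-arc on its hub, the orientation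
   restricted to the copy has outdegree less than d, and induction yields a pair
   inside the copy, all of whose common neighbours lie in the copy. *)

From mathcomp Require Import all_boot zify.
Set Implicit Arguments. Unset Strict Implicit. Unset Printing Implicit Defensive.

Notation L0 := (@Ordinal 6 0 isT).
Notation L1 := (@Ordinal 6 1 isT).
Notation L2 := (@Ordinal 6 2 isT).
Notation L3 := (@Ordinal 6 3 isT).
Notation L4 := (@Ordinal 6 4 isT).
Notation L5 := (@Ordinal 6 5 isT).

Lemma constructible_ext k (T : finType) (e e' : rel T) (l l' : T -> 'I_k) :
  constructible e l -> e =2 e' -> l =1 l' -> constructible e' l'.
Proof.
move=> c ee' ll'; apply: (cons_iso c); split; first by exists id.
by split=> [x y|x]; rewrite /= ?ee' ?ll'.
Qed.

Definition copies_rel (m : nat) (Y : finType) (e : rel Y) : rel ('I_m * Y) :=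
  fun p q => (p.1 == q.1) && e p.2 q.2.
Arguments copies_rel m {Y} e.

Lemma constructible_copies k (Y : finType) (e : rel Y) (l : Y -> 'I_k) m :
  0 < m -> constructible e l -> constructible (copies_rel m e) (l \o snd).
Proof.
case: m => // m _ c; elim: m => [|m IH].
  apply: (cons_iso c (f := fun y => (ord0, y))); split.
    by exists snd => // -[i y]; rewrite (ord1 i).
  by split=> // x y; rewrite /copies_rel /= eqxx.
pose f (z : Y + 'I_m.+1 * Y) : 'I_m.+2 * Y :=
  match z with inl y => (ord0, y) | inr (i, y) => (lift ord0 i, y) end.
pose g (p : 'I_m.+2 * Y) : Y + 'I_m.+1 * Y :=
  if unlift ord0 p.1 is Some i then inr (i, p.2) else inl p.2.
apply: (cons_iso (cons_union c IH) (f := f)); split.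
  exists g => [[y|[i y]]|[i y]]; rewrite /f /g /= ?unlift_none ?liftK //.
  by case: unliftP => [j|] ->.
by split=> [[y|[i y]] [y'|[i' y']]|[y|[i y]]] //=; rewrite /copies_rel /= ?eqxx.
Qed.

Lemma add_edgesE k (T : finType) (e : rel T) (l : T -> 'I_k) i j x y : i != j ->
  add_edges e l i j x y =
  e x y || ((l x == i) && (l y == j)) || ((l x == j) && (l y == i)).
Proof.
move=> ij; rewrite /add_edges -orbA; case: (x =P y) => [->|] //=.
by case: (l y =P i) => [->|]; rewrite ?(negbTE ij) ?andbF.
Qed.

Lemma card_set_sum (A B : finType) (P : pred (A + B)) :
  #|[set x | P x]| = #|[set a | P (inl a)]| + #|[set b | P (inr b)]|.
Proof.
by rewrite -!sum1_card big_sumType; congr (_ + _); apply: eq_bigl => x; rewrite !inE.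
Qed.

Lemma card_set_snd m (Y : finType) (P : pred Y) :
  #|[set p : 'I_m * Y | P p.2]| = m * #|[set y | P y]|.
Proof.
have -> : [set p : 'I_m * Y | P p.2] = setX setT [set y | P y].
  by apply/setP => -[i y]; rewrite !inE.
by rewrite cardsX cardsT card_ord.
Qed.

Lemma card_set_unit (b : bool) : #|[set _ : unit | b]| = b.
Proof. by case: b; rewrite ?cardsT ?card_unit // -[RHS](cards0 unit); congr #|_|; apply/setP. Qed.

Lemma labels_of_halves k (T : finType) (l : T -> 'I_k) i j : i != j ->
  #|[set x | l x == i]| * 2 = #|T| -> #|[set x | l x == j]| * 2 = #|T| ->
  forall x, l x = i \/ l x = j.
Proof.
move=> ij ci cj x.
have full : [set x | l x == i] :|: [set x | l x == j] = setT.
  apply/eqP; rewrite eqEcard subsetT cardsT cardsU.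
  have -> : [set x | l x == i] :&: [set x | l x == j] = set0.
    by apply/setP => y; rewrite !inE; case: (l y =P i) => // ->; rewrite (negbTE ij).
  rewrite cards0; lia.
have : x \in [set: T] by rewrite inE.
by rewrite -full !inE => /orP [/eqP|/eqP]; [left|right].
Qed.

Lemma outdeg_ge_preimage (T I : finType) (o : rel T) x (f : I -> T) :
  injective f -> #|[set i | o x (f i)]| <= outdeg o x.
Proof.
move=> f_inj; rewrite -(card_imset [set i | o x (f i)] f_inj).
apply: subset_leq_card.
by apply/subsetP => y /imsetP [i]; rewrite !inE => oi ->.
Qed.

Lemma outdeg_relpre_lt (T U : finType) (o : rel U) (f : T -> U) x w :
  injective f -> o (f x) w -> w \notin codom f ->
  outdeg (relpre f o) x < outdeg o (f x).
Proof.
move=> f_inj ow wf; rewrite /outdeg -(card_imset [set y | relpre f o x y] f_inj).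
have wnew : w \notin f @: [set y | relpre f o x y].
  by apply: contra wf => /imsetP [y _ ->]; apply: codom_f.
have <- : #|w |: f @: [set y | relpre f o x y]| = #|f @: [set y | relpre f o x y]|.+1.
  by rewrite cardsU1 wnew.
apply: subset_leq_card.
apply/subsetP => y; rewrite !inE => /predU1P [->|/imsetP [z]] //.
by rewrite inE => oz ->.
Qed.

Definition open_pair (T : finType) (e : rel T) (l : T -> 'I_6) (o : rel T) (u v : T) :=
  l u = L0 /\ l v = L1 /\ dist2 e u v /\
  forall x, e u x -> e v x -> ~~ o u x /\ ~~ o v x.

Definition forces_open_pair d (T : finType) (e : rel T) (l : T -> 'I_6) :=
  forall o : rel T, partial_orientation e o -> (forall x, outdeg o x < d) ->
  exists u v, open_pair e l o u v.

Section Step.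

Variables (a : nat) (T : finType) (e : rel T) (l : T -> 'I_6).
Hypothesis l01 : forall s, l s = L0 \/ l s = L1.

Definition hubbedT : finType := (T + (unit + unit))%type.

Definition hubbed_rel : rel hubbedT := fun x y =>
  match x, y with
  | inl s, inl t => e s t
  | inl s, inr (inl _) | inr (inl _), inl s => l s == L0
  | inl s, inr (inr _) | inr (inr _), inl s => l s == L1
  | _, _ => false
  end.

Definition stepT : finType := ('I_a * hubbedT + (unit + unit))%type.

(* In copy i, inr (inl tt) is the hub p_i and inr (inr tt) the hub q_i; the outer
   inr (inl tt) and inr (inr tt) are the apices u and v. *)
Definition step_rel : rel stepT := fun x y =>
  match x, y with
  | inl p, inl q => copies_rel a hubbed_rel p q
  | inl (_, inr (inr _)), inr (inl _) | inr (inl _), inl (_, inr (inr _)) => true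
  | inl (_, inr (inl _)), inr (inr _) | inr (inr _), inl (_, inr (inl _)) => true
  | _, _ => false
  end.

Definition hubbed_lab (y : hubbedT) : 'I_6 :=
  match y with inl s => l s | inr (inl _) => L1 | inr (inr _) => L0 end.

Definition step_lab (x : stepT) : 'I_6 :=
  match x with inl p => hubbed_lab p.2 | inr (inl _) => L0 | inr (inr _) => L1 end.

Let two_points (i j : 'I_6) :=
  cons_union (cons_single i) (cons_single j).

(* The hubs keep the spare labels L4 and L5 until all copies are joined to the apices. *)
Lemma constructible_hubbed : constructible e l ->
  constructible hubbed_rel (sum_lab l (sum_lab (fun _ => L4) (fun _ => L5))).
Proof.
move=> c; apply: (constructible_ext (cons_relabel L3 L5 (cons_relabel L2 L4
  (cons_join L1 L3 (cons_join L0 L2 (cons_union c (two_points L2 L3))))))).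
- move=> [s|[[]|[]]] [t|[[]|[]]]; rewrite /= !add_edgesE //=.
  all: try (case: (l01 s) => ->); try (case: (l01 t) => ->).
  all: rewrite ?orbF //.
- by move=> [s|[[]|[]]]; rewrite /relabel //=; case: (l01 s) => ->.
Qed.

Lemma constructible_step : 0 < a -> constructible e l -> constructible step_rel step_lab.
Proof.
move=> a_gt0 c.
have cc := constructible_copies a_gt0 (constructible_hubbed c).
apply: (constructible_ext (cons_relabel L3 L1 (cons_relabel L2 L0
  (cons_relabel L5 L0 (cons_relabel L4 L1
  (cons_join L3 L4 (cons_join L2 L5 (cons_union cc (two_points L2 L3))))))))).
- move=> [[i [s|[[]|[]]]]|[[]|[]]] [[j [t|[[]|[]]]]|[[]|[]]];
    rewrite /= !add_edgesE //= /copies_rel /=.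
  all: try (case: (l01 s) => ->); try (case: (l01 t) => ->).
  all: rewrite ?orbF ?andbT //.
- by move=> [[i [s|[[]|[]]]]|[[]|[]]]; rewrite /relabel //=; case: (l01 s) => ->.
Qed.

Lemma card_step : #|stepT| = a * (#|T| + 2) + 2.
Proof. by rewrite !card_sum card_prod card_ord !card_sum !card_unit. Qed.

Lemma card_step_lab k : k = L0 \/ k = L1 ->
  #|[set x | step_lab x == k]| = a * (#|[set s | l s == k]| + 1) + 1.
Proof.
move=> k01; rewrite card_set_sum.
rewrite (card_set_snd _ (fun y => hubbed_lab y == k)) card_set_sum /= !card_set_sum.
by case: k01 => ->; rewrite !card_set_unit.
Qed.

Definition emb (i : 'I_a) (s : T) : stepT := inl (i, inl s).
Definition hub_p (i : 'I_a) : stepT := inl (i, inr (inl tt)).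
Definition hub_q (i : 'I_a) : stepT := inl (i, inr (inr tt)).
Definition apex_u : stepT := inr (inl tt).
Definition apex_v : stepT := inr (inr tt).
Definition hub_of (i : 'I_a) (s : T) : stepT := if l s == L0 then hub_p i else hub_q i.

Lemma emb_inj i : injective (emb i).
Proof. by move=> s t []. Qed.

Lemma hub_p_inj : injective hub_p.
Proof. by move=> i j []. Qed.

Lemma hub_q_inj : injective hub_q.
Proof. by move=> i j []. Qed.

Lemma step_rel_emb i s t : step_rel (emb i s) (emb i t) = e s t.
Proof. by rewrite /= /copies_rel /= eqxx. Qed.

Lemma hub_of_notin_copy i s : hub_of i s \notin codom (emb i).
Proof. by apply/codomP => -[t]; rewrite /hub_of; case: ifP. Qed.

Lemma partial_orientation_copy o i :
  partial_orientation step_rel o -> partial_orientation e (relpre (emb i) o).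
Proof. by move=> po s t /po; rewrite step_rel_emb. Qed.

Lemma open_pair_hub_p o i s : l s = L0 ->
  ~~ o (emb i s) (hub_p i) -> ~~ o apex_v (hub_p i) ->
  open_pair step_rel step_lab o (emb i s) apex_v.
Proof.
move=> ls sp vp; split=> //; split=> //; split.
  by split=> //; split=> //; exists (hub_p i); rewrite /= /copies_rel /= eqxx ls.
by move=> [[j [t|[[]|[]]]]|[[]|[]]] //=; rewrite /copies_rel /= => /andP [/eqP <- _].
Qed.

Lemma open_pair_hub_q o i s : l s = L1 ->
  ~~ o (emb i s) (hub_q i) -> ~~ o apex_u (hub_q i) ->
  open_pair step_rel step_lab o apex_u (emb i s).
Proof.
move=> ls sq uq; split=> //; split=> //; split.
  by split=> //; split=> //; exists (hub_q i); rewrite /= /copies_rel /= eqxx ls.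
by move=> [[j [t|[[]|[]]]]|[[]|[]]] //=; rewrite /copies_rel /= => _ /andP [/eqP <- _].
Qed.

Lemma open_pair_copy o i u v :
  open_pair e l (relpre (emb i) o) u v ->
  open_pair step_rel step_lab o (emb i u) (emb i v).
Proof.
move=> [lu [lv [[uv [nuv [x uxv]]] common]]].
have dist2_uv : dist2 step_rel (emb i u) (emb i v).
  split; first by rewrite (inj_eq (@emb_inj i)).
  by split; [rewrite step_rel_emb | exists (emb i x); rewrite !step_rel_emb].
split=> //; split=> //; split=> //.
move=> [[j [t|[[]|[]]]]|[[]|[]]] //=; rewrite /copies_rel /= ?lu ?lv ?andbF //.
by move=> /andP [/eqP <- ut] /andP [_ vt]; apply: common.
Qed.

Lemma exists_free_copy d o : 2 * d < a -> (forall x, outdeg o x < d.+1) ->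
  exists i, ~~ o apex_u (hub_q i) && ~~ o apex_v (hub_p i).
Proof.
move=> ha od.
pose A := [set i | o apex_u (hub_q i)] :|: [set i | o apex_v (hub_p i)].
have into_q := outdeg_ge_preimage o apex_u hub_q_inj.
have into_p := outdeg_ge_preimage o apex_v hub_p_inj.
have card_A : #|A| < a.
  by rewrite cardsU; have := od apex_u; have := od apex_v; rewrite !ltnS; lia.
have : 0 < #|~: A| by have := cardsC A; rewrite card_ord; lia.
by case/card_gt0P => i; rewrite !inE negb_or; exists i.
Qed.

Lemma forces_open_pair_step d :
  2 * d < a -> forces_open_pair d e l -> forces_open_pair d.+1 step_rel step_lab.
Proof.
move=> ha IH o po od.
have [i /andP [uq vp]] := exists_free_copy ha od.
case: (pickP (fun s => ~~ o (emb i s) (hub_of i s))) => [s | to_hub].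
  rewrite /hub_of; case: (l01 s) => ls; rewrite ls /= => s_hub.
  - by exists (emb i s), apex_v; apply: open_pair_hub_p.
  - by exists apex_u, (emb i s); apply: open_pair_hub_q.
have [||u [v uv]] := IH (relpre (emb i) o).
- exact: partial_orientation_copy.
- move=> s; rewrite -ltnS; apply: leq_trans (od (emb i s)).
  apply: (outdeg_relpre_lt (@emb_inj i) _ (hub_of_notin_copy i s)).
  by apply: negbFE; apply: to_hub.
- by exists (emb i u), (emb i v); apply: open_pair_copy.
Qed.
End Step.

Lemma exists_hard_graph a d : 2 <= a -> 2 * d - 1 <= a ->
  exists (T : finType) (e : rel T) (l : T -> 'I_6),
    constructible e l /\
    #|[set x | l x == L0]| * 2 = #|T| /\
    #|[set x | l x == L1]| * 2 = #|T| /\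
    #|T| <= 8 * a ^ d - 6 /\
    forces_open_pair d e l.
Proof.
move=> a_ge2; elim: d => [_|d IH hd].
  exists (unit + unit)%type, (sum_rel (fun _ _ => false) (fun _ _ => false)),
    (sum_lab (fun _ => L0) (fun _ => L1)).
  split; first exact: cons_union (cons_single _) (cons_single _).
  rewrite card_sum !card_unit !card_set_sum /= !card_set_unit expn0.
  by do !split=> //; move=> o _ /(_ (inl tt)).
have [|T [e [l [c [half0 [half1 [size_T forces]]]]]]] := IH; first lia.
have l01 := labels_of_halves (isT : L0 != L1) half0 half1.
exists (stepT a T), (step_rel e l), (step_lab l).
rewrite card_step !card_step_lab; [|by right|by left].
split; first by apply: constructible_step => //; lia.
split; first lia.
split; first lia.
split; last by apply: forces_open_pair_step => //; lia.
have : 0 < a ^ d by rewrite expn_gt0; lia.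
rewrite expnS; move: (a ^ d) size_T => A; nia.
Qed.

Theorem lemma32 (d a : nat) :
  maxn 2 (2 * d - 1) <= a ->
  exists (T : finType) (e : rel T) (l : T -> 'I_6),
    constructible e l /\
    #|[set x | l x == inord 0]| * 2 = #|T| /\
    #|[set x | l x == inord 1]| * 2 = #|T| /\
    #|T| <= 8 * a ^ d - 6 /\
    (forall o : rel T, partial_orientation e o ->
       (forall x, outdeg o x < d) ->
       exists u v, l u = inord 0 /\ l v = inord 1 /\ dist2 e u v /\
         forall x, e u x -> e v x -> ~~ o u x /\ ~~ o v x).
Proof.
rewrite geq_max => /andP [a_ge2 a_ge].
have -> : inord 0 = L0 :> 'I_6 by apply/val_inj; rewrite /= inordK.
have -> : inord 1 = L1 :> 'I_6 by apply/val_inj; rewrite /= inordK.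
exact: exists_hard_graph.
Qed.
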